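(* Let $\psi\in\mathcal K$ have radius of convergence $R_\psi>0$ and Khinchin family $(Y_t)$, and let $g(z)=\sum_{n\ge1}A_nz^n$ be the solution of Lagrange's equation $g(z)=z\psi(g(z))$. For $t\in(0,R_\psi)$ let $q(t)$ be the extinction probability of the Bienaymé–Galton–Watson process with offspring distribution $Y_t$. Then $$q(t)=\sum_{n=1}^\infty\frac{A_nt^{n-1}}{\psi(t)^n}=\frac{g(t/\psi(t))}{t}\qquad\text{for every }t\in(0,R_\psi).$$
   Context: $\mathcal K$ is the class of non-constant power series $f(z)=\sum_{n\ge0}a_nz^n$ with positive radius of convergence $R$, non-negative coefficients and $a_0>0$; its Khinchin family $(X_t)_{t\in[0,R)}$ is given by $\mathbf P(X_t=n)=a_nt^n/f(t)$ for $n\ge0$, $t\in(0,R)$. The solution $g$ of Lagrange's equation with data $\psi$ is the unique power series satisfying $g(z)=z\psi(g(z))$; its coefficients are non-negative, $A_0=0$. (When $t/\psi(t)$ equals the radius of convergence of $g$, $g(t/\psi(t))$ denotes the value of the convergent series there.) The extinction probability is the probability that the Galton–Watson tree is finite. *)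

From Stdlib Require Import Reals.
From Coquelicot Require Import Coquelicot.
Open Scope R_scope.

Definition in_K (a : nat -> R) : Prop :=
  (forall n, 0 <= a n) /\ 0 < a 0%nat /\ (exists n, (1 <= n)%nat /\ a n <> 0) /\
  Rbar_lt (Finite 0) (CV_radius a).

Definition khinchin (a : nat -> R) (t : R) : nat -> R :=
  fun n => a n * t ^ n / PSeries a t.

Definition fps_mul (u v : nat -> R) : nat -> R :=
  fun n => sum_f_R0 (fun i => u i * v (n - i)%nat) n.

Definition fps_one : nat -> R := fun n => if Nat.eqb n 0 then 1 else 0.

Fixpoint fps_pow (u : nat -> R) (k : nat) : nat -> R :=
  match k with
  | O => fps_one
  | S k' => fps_mul u (fps_pow u k')
  end.

(** Coefficients of the formal composition psi(g(z)), valid when g_0 = 0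
    (then [z^n] g^k = 0 for k > n). *)
Definition fps_comp (a G : nat -> R) : nat -> R :=
  fun n => sum_f_R0 (fun k => a k * fps_pow G k n) n.

(** [G] is the (formal) solution of Lagrange's equation g(z) = z psi(g(z)):
    G_0 = 0 and [z^(n+1)] g = [z^n] psi(g). *)
Definition lagrange_solution (psi G : nat -> R) : Prop :=
  G 0%nat = 0 /\ forall n, G (S n) = fps_comp psi G n.

(** Bienaymé–Galton–Watson process with offspring distribution p, Z_0 = 1.
    [conv_pow p j] is the law of a sum of j i.i.d. copies of the offspring
    variable (j-fold convolution power); [gw_dist p n k] = P(Z_n = k),
    defined through the Markov transition P(Z_{n+1}=k | Z_n=j) = p^{*j}(k). *)
Fixpoint conv_pow (p : nat -> R) (j : nat) : nat -> R :=
  match j with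
  | O => fun k => if Nat.eqb k 0 then 1 else 0
  | S j' => fun k => sum_f_R0 (fun i => p i * conv_pow p j' (k - i)%nat) k
  end.

Fixpoint gw_dist (p : nat -> R) (n : nat) : nat -> R :=
  match n with
  | O => fun k => if Nat.eqb k 1 then 1 else 0
  | S n' => fun k => Series (fun j => gw_dist p n' j * conv_pow p j k)
  end.

(** Extinction probability: the probability that the tree is finite, i.e.
    P(exists n, Z_n = 0) = lim_n P(Z_n = 0) (increasing events). *)
Definition extinction_prob (p : nat -> R) : Rbar :=
  Lim_seq (fun n => gw_dist p n 0%nat).

From Stdlib Require Import Reals Lra Lia.
From Coquelicot Require Import Coquelicot.
Open Scope R_scope.

(* Let F(s) = psi(t s) / psi(t) be the generating function of Y_t and z = t / psi(t),
   so that t F(s) = z psi(t s).  The probability that the process is extinct by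
   generation n is the iterate x_n = F^n(0), which increases to q(t).  Since
   [z^(n+1)] g = [z^n] psi(g) involves only A_0, ..., A_n, the partial sums S_N of
   sum_n A_n z^n satisfy S_(N+1) <= z psi(S_N), whence S_N <= t x_N <= t by induction.
   So the series converges to some G <= t with G = z psi(G), and then t x_n <= G by
   induction as well; squeezing gives q(t) = G / t = g(t / psi(t)) / t. *)

Lemma sum_f_R0_ge0 (u : nat -> R) (N : nat) :
  (forall i, (i <= N)%nat -> 0 <= u i) -> 0 <= sum_f_R0 u N.
Proof.
  intros Hu. induction N as [|N IH]; simpl; [apply Hu; lia|].
  assert (0 <= sum_f_R0 u N) by (apply IH; intros; apply Hu; lia).
  assert (0 <= u (S N)) by (apply Hu; lia). lra.
Qed.

Lemma sum_f_R0_le_is_series (u : nat -> R) (l : R) (N : nat) :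
  (forall n, 0 <= u n) -> is_series u l -> sum_f_R0 u N <= l.
Proof. intros Hu Hl. apply sum_incr; [now apply is_series_Reals | exact Hu]. Qed.

Lemma is_series_term_le (u : nat -> R) (l : R) (k : nat) :
  (forall n, 0 <= u n) -> is_series u l -> u k <= l.
Proof.
  intros Hu Hl. apply Rle_trans with (sum_f_R0 u k).
  - destruct k as [|k]; simpl; [lra|].
    assert (0 <= sum_f_R0 u k) by now apply cond_pos_sum. lra.
  - now apply sum_f_R0_le_is_series.
Qed.

Lemma is_series_ge0 (u : nat -> R) (l : R) :
  (forall n, 0 <= u n) -> is_series u l -> 0 <= l.
Proof. intros Hu Hl. apply Rle_trans with (u 0%nat); auto using is_series_term_le. Qed.

Lemma is_series_le (u v : nat -> R) (lu lv : R) :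
  (forall n, u n <= v n) -> is_series u lu -> is_series v lv -> lu <= lv.
Proof.
  intros Huv Hu Hv. apply is_series_Reals, is_lim_seq_Reals in Hu, Hv.
  exact (is_lim_seq_le _ _ _ _ (fun N => sum_growing u v N Huv) Hu Hv).
Qed.

Lemma is_series_le_bound (u : nat -> R) (l M : R) :
  (forall N, sum_f_R0 u N <= M) -> is_series u l -> l <= M.
Proof.
  intros HM Hl. apply is_series_Reals, is_lim_seq_Reals in Hl.
  exact (is_lim_seq_le _ _ _ _ HM Hl (is_lim_seq_const M)).
Qed.

Lemma ex_series_bounded_nonneg (u : nat -> R) (M : R) :
  (forall n, 0 <= u n) -> (forall N, sum_f_R0 u N <= M) -> ex_series u.
Proof.
  intros Hu HM.
  assert (Hincr : forall N, sum_f_R0 u N <= sum_f_R0 u (S N))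
    by (intro N; simpl; specialize (Hu (S N)); lra).
  destruct (ex_finite_lim_seq_incr _ M Hincr HM) as [l Hl].
  exists l. now apply is_series_Reals, is_lim_seq_Reals.
Qed.

Lemma Series_ge0 (u : nat -> R) : (forall n, 0 <= u n) -> 0 <= Series u.
Proof.
  intros Hu.
  assert (Hsum : forall N, 0 <= sum_n u N)
    by (intro N; rewrite sum_n_Reals; now apply cond_pos_sum).
  assert (H := Lim_seq_le_loc (fun _ => 0) (sum_n u) (filter_forall _ Hsum)).
  rewrite Lim_seq_const in H. unfold Series.
  destruct (Lim_seq (sum_n u)); simpl in *; lra.
Qed.

Lemma is_series_finite_support (u : nat -> R) (N : nat) :
  (forall k, (N < k)%nat -> u k = 0) -> is_series u (sum_f_R0 u N).
Proof.
  intros Hu. apply is_series_Reals, is_lim_seq_Reals.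
  apply is_lim_seq_ext_loc with (fun _ => sum_f_R0 u N); [|apply is_lim_seq_const].
  exists N. intros n Hn. induction Hn as [|n Hn IH]; [reflexivity|].
  simpl. rewrite IH, (Hu (S n)) by lia. ring.
Qed.

Lemma is_series_sum_f_R0 (a : nat -> nat -> R) (c : nat -> R) (K : nat) :
  (forall k, is_series (fun j => a j k) (c k)) ->
  is_series (fun j => sum_f_R0 (a j) K) (sum_f_R0 c K).
Proof.
  intros Hc. induction K as [|K IH]; simpl; [apply Hc|].
  exact (is_series_plus _ _ _ _ IH (Hc (S K))).
Qed.

Lemma is_series_tonelli (a : nat -> nat -> R) (r : nat -> R) (S : R) :
  (forall j k, 0 <= a j k) -> (forall j, is_series (a j) (r j)) -> is_series r S ->
  (forall k, ex_series (fun j => a j k)) /\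
  is_series (fun k => Series (fun j => a j k)) S.
Proof.
  intros Ha Hr HS.
  assert (Hcol : forall k, ex_series (fun j => a j k)).
  { intros k. apply (ex_series_bounded_nonneg _ S (fun j => Ha j k)). intros N.
    apply Rle_trans with (sum_f_R0 r N).
    - apply sum_growing. intros j. exact (is_series_term_le _ _ k (Ha j) (Hr j)).
    - apply sum_f_R0_le_is_series; [|exact HS].
      intro j. exact (is_series_ge0 _ _ (Ha j) (Hr j)). }
  split; [exact Hcol|].
  set (c := fun k => Series (fun j => a j k)).
  assert (Hc : forall k, is_series (fun j => a j k) (c k)) by (intro k; now apply Series_correct).
  assert (HcS : forall K, sum_f_R0 c K <= S).
  { intros K. refine (is_series_le _ _ _ _ _ (is_series_sum_f_R0 a c K Hc) HS).
    intros j. exact (sum_f_R0_le_is_series _ _ K (Ha j) (Hr j)). }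
  assert (Hc0 : forall k, 0 <= c k)
    by (intro k; exact (is_series_ge0 _ _ (fun j => Ha j k) (Hc k))).
  destruct (ex_series_bounded_nonneg c S Hc0 HcS) as [C HC].
  assert (HCS : C <= S) by exact (is_series_le_bound _ _ _ HcS HC).
  assert (HSC : S <= C).
  { apply (is_series_le_bound r S C); [intros J | exact HS].
    refine (is_series_le _ _ _ _ _ (is_series_sum_f_R0 (fun k j => a j k) r J Hr) HC).
    intros k. exact (sum_f_R0_le_is_series _ _ J (fun j => Ha j k) (Hc k)). }
  replace S with C by lra. exact HC.
Qed.

Lemma fps_pow_coef_lt (G : nat -> R) (k n : nat) :
  G 0%nat = 0 -> (n < k)%nat -> fps_pow G k n = 0.
Proof.
  intros HG0. revert n. induction k as [|k IH]; intros n Hn; [lia|].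
  simpl. unfold fps_mul. apply sum_eq_R0. intros [|i] Hi.
  - rewrite HG0. ring.
  - rewrite IH by lia. ring.
Qed.

Lemma fps_pow_ge0 (u : nat -> R) (N k n : nat) :
  (forall i, (i <= N)%nat -> 0 <= u i) -> (n <= N)%nat -> 0 <= fps_pow u k n.
Proof.
  intros Hu. revert n. induction k as [|k IH]; intros n Hn; simpl.
  - unfold fps_one. destruct (Nat.eqb n 0); lra.
  - unfold fps_mul. apply sum_f_R0_ge0. intros i Hi.
    apply Rmult_le_pos; [apply Hu | apply IH]; lia.
Qed.

Lemma fps_comp_ge0 (a u : nat -> R) (n : nat) :
  (forall i, 0 <= a i) -> (forall i, (i <= n)%nat -> 0 <= u i) -> 0 <= fps_comp a u n.
Proof.
  intros Ha Hu. apply sum_f_R0_ge0. intros i _.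
  apply Rmult_le_pos; [apply Ha | exact (fps_pow_ge0 u n i n Hu (le_n n))].
Qed.

Lemma fps_pow_ext_le (u v : nat -> R) (N k n : nat) :
  (forall i, (i <= N)%nat -> u i = v i) -> (n <= N)%nat -> fps_pow u k n = fps_pow v k n.
Proof.
  intros Huv. revert n. induction k as [|k IH]; intros n Hn; [reflexivity|].
  simpl. unfold fps_mul. apply sum_eq. intros i Hi.
  rewrite Huv, IH by lia. reflexivity.
Qed.

Lemma fps_comp_ext_le (a u v : nat -> R) (N n : nat) :
  (forall i, (i <= N)%nat -> u i = v i) -> (n <= N)%nat -> fps_comp a u n = fps_comp a v n.
Proof.
  intros Huv Hn. apply sum_eq. intros k _.
  rewrite (fps_pow_ext_le u v N k n Huv Hn). reflexivity.
Qed.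

Lemma conv_pow_fps_pow (p : nat -> R) (j k : nat) : conv_pow p j k = fps_pow p j k.
Proof.
  revert k. induction j as [|j IH]; intros k; [reflexivity|].
  simpl. unfold fps_mul. apply sum_eq. intros i _. now rewrite IH.
Qed.

Lemma is_series_fps_pow (G : nat -> R) (z g : R) (k : nat) :
  (forall n, 0 <= G n) -> 0 <= z -> is_series (fun n => G n * z ^ n) g ->
  is_series (fun n => fps_pow G k n * z ^ n) (g ^ k).
Proof.
  intros HG Hz Hg. induction k as [|k IH].
  - replace (g ^ 0) with (sum_f_R0 (fun n => fps_one n * z ^ n) 0)
      by (unfold fps_one; simpl; ring).
    apply is_series_finite_support. intros [|n] Hn; [lia | unfold fps_one; simpl; ring].
  - assert (Hgk : forall n, 0 <= fps_pow G k n * z ^ n).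
    { intros n. apply Rmult_le_pos; [|now apply pow_le].
      exact (fps_pow_ge0 G n k n (fun i _ => HG i) (le_n n)). }
    assert (Hg0 : forall n, 0 <= G n * z ^ n)
      by (intro n; apply Rmult_le_pos; [|apply pow_le]; auto).
    replace (g ^ S k) with (g * g ^ k) by reflexivity.
    refine (is_series_ext _ _ _ _ (is_series_mult_pos _ _ _ _ Hg IH Hg0 Hgk)).
    intros n. simpl. unfold fps_mul.
    rewrite <- (Rmult_comm (z ^ n)), scal_sum. apply sum_eq. intros i Hi.
    replace (z ^ n) with (z ^ i * z ^ (n - i)) by (rewrite <- pow_add; f_equal; lia). ring.
Qed.

Lemma is_series_fps_comp (a G : nat -> R) (z g S : R) :
  (forall n, 0 <= a n) -> (forall n, 0 <= G n) -> G 0%nat = 0 -> 0 <= z ->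
  is_series (fun n => G n * z ^ n) g -> is_series (fun k => a k * g ^ k) S ->
  is_series (fun n => fps_comp a G n * z ^ n) S.
Proof.
  intros Ha HG HG0 Hz Hg HS.
  set (b := fun k n => a k * (fps_pow G k n * z ^ n)).
  assert (Hb : forall k n, 0 <= b k n).
  { intros k n. apply Rmult_le_pos; [apply Ha | apply Rmult_le_pos; [|now apply pow_le]].
    exact (fps_pow_ge0 G n k n (fun i _ => HG i) (le_n n)). }
  assert (Hrow : forall k, is_series (b k) (a k * g ^ k)).
  { intros k. rewrite Rmult_comm.
    apply (is_series_ext (fun n => fps_pow G k n * z ^ n * a k)).
    - intros n. unfold b. simpl. ring.
    - apply is_series_scal_r, is_series_fps_pow; assumption. }
  destruct (is_series_tonelli b _ S Hb Hrow HS) as [_ Hcol].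
  refine (is_series_ext _ _ _ _ Hcol). intros n.
  rewrite (is_series_unique _ (sum_f_R0 (fun k => b k n) n)).
  - unfold fps_comp. rewrite <- (Rmult_comm (z ^ n)), scal_sum.
    apply sum_eq. intros k _. unfold b. ring.
  - apply is_series_finite_support. intros k Hk. unfold b.
    rewrite (fps_pow_coef_lt G k n HG0 Hk). ring.
Qed.

Lemma is_series_PSeries (a : nat -> R) (y : R) :
  Rbar_lt (Rabs y) (CV_radius a) -> is_series (fun k => a k * y ^ k) (PSeries a y).
Proof.
  intros Hy. apply (is_series_ext (fun k => scal (pow_n y k) (a k))).
  - intros k. rewrite pow_n_pow. apply Rmult_comm.
  - exact (PSeries_correct a y (CV_radius_inside a y Hy)).
Qed.

Lemma is_series_PSeries_ge0 (a : nat -> R) (y : R) :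
  0 <= y -> Rbar_lt y (CV_radius a) -> is_series (fun k => a k * y ^ k) (PSeries a y).
Proof. intros Hy Hr. apply is_series_PSeries. now rewrite Rabs_pos_eq. Qed.

Section NonnegativePowerSeries.

Variable a : nat -> R.
Hypothesis a_ge0 : forall n, 0 <= a n.

Lemma PSeries_le (y1 y2 : R) :
  0 <= y1 <= y2 -> Rbar_lt y2 (CV_radius a) -> PSeries a y1 <= PSeries a y2.
Proof.
  intros Hy Hr.
  assert (Hr1 : Rbar_lt y1 (CV_radius a))
    by (apply (Rbar_le_lt_trans _ y2); [simpl; lra | exact Hr]).
  refine (is_series_le _ _ _ _ _ (is_series_PSeries_ge0 a y1 ltac:(lra) Hr1)
                                 (is_series_PSeries_ge0 a y2 ltac:(lra) Hr)).
  intros n. apply Rmult_le_compat_l; [apply a_ge0 | apply pow_incr; lra].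
Qed.

Lemma PSeries_gt0 (y : R) :
  0 < a 0%nat -> 0 <= y -> Rbar_lt y (CV_radius a) -> 0 < PSeries a y.
Proof.
  intros Ha0 Hy Hr.
  assert (Hterm : forall n, 0 <= a n * y ^ n)
    by (intro n; apply Rmult_le_pos; [|apply pow_le]; auto).
  assert (H := is_series_term_le _ _ 0 Hterm (is_series_PSeries_ge0 a y Hy Hr)).
  simpl in H. lra.
Qed.

End NonnegativePowerSeries.

Section LagrangeEquation.

Variables psi A : nat -> R.
Hypotheses (psi_ge0 : forall n, 0 <= psi n) (A_lagrange : lagrange_solution psi A).

Lemma lagrange_solution_ge0 (n : nat) : 0 <= A n.
Proof.
  destruct A_lagrange as [HA0 HAS].
  assert (H : forall i, (i <= n)%nat -> 0 <= A i).
  { induction n as [|n IH]; intros i Hi.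
    - replace i with 0%nat by lia. rewrite HA0. lra.
    - destruct (Nat.le_gt_cases i n) as [Hin | Hin]; [now apply IH|].
      replace i with (S n) by lia. rewrite HAS. now apply fps_comp_ge0. }
  now apply H.
Qed.

Lemma lagrange_partial_sum_succ_le (z : R) (N : nat) :
  0 <= z -> Rbar_lt (sum_f_R0 (fun n => A n * z ^ n) N) (CV_radius psi) ->
  sum_f_R0 (fun n => A n * z ^ n) (S N)
    <= z * PSeries psi (sum_f_R0 (fun n => A n * z ^ n) N).
Proof.
  destruct A_lagrange as [HA0 HAS]. intros Hz Hr.
  set (SN := sum_f_R0 (fun n => A n * z ^ n) N) in *.
  assert (HA := lagrange_solution_ge0).
  (* Only A_0, ..., A_N enter the first N + 1 coefficients of psi(g), so A may be
     replaced by its truncation B at N, whose value at z is SN. *)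
  set (B := fun n => if Nat.leb n N then A n else 0).
  assert (HBA : forall i, (i <= N)%nat -> B i = A i)
    by (intros i Hi; unfold B; now rewrite (proj2 (Nat.leb_le i N) Hi)).
  assert (HB0 : forall n, 0 <= B n)
    by (intro n; unfold B; destruct (Nat.leb n N); [apply HA | lra]).
  assert (HB : is_series (fun n => B n * z ^ n) SN).
  { replace SN with (sum_f_R0 (fun n => B n * z ^ n) N)
      by (apply sum_eq; intros i Hi; now rewrite HBA).
    apply is_series_finite_support. intros k Hk. unfold B.
    rewrite (proj2 (Nat.leb_gt k N) Hk). ring. }
  assert (HSN : 0 <= SN)
    by (apply cond_pos_sum; intro n; apply Rmult_le_pos; [|apply pow_le]; auto).
  assert (HB_0 : B 0%nat = 0) by (rewrite HBA by lia; exact HA0).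
  assert (Hcomp := is_series_fps_comp psi B z SN _ psi_ge0 HB0 HB_0 Hz HB
                     (is_series_PSeries_ge0 psi SN HSN Hr)).
  rewrite decomp_sum by lia. simpl pred. rewrite HA0, Rmult_0_l, Rplus_0_l.
  replace (sum_f_R0 (fun i => A (S i) * z ^ S i) N)
    with (z * sum_f_R0 (fun n => fps_comp psi B n * z ^ n) N).
  - apply Rmult_le_compat_l; [exact Hz|].
    apply sum_f_R0_le_is_series; [|exact Hcomp].
    intros n. apply Rmult_le_pos; [now apply fps_comp_ge0 | now apply pow_le].
  - rewrite scal_sum. apply sum_eq. intros i Hi.
    rewrite HAS, (fps_comp_ext_le psi A B N i (fun j Hj => eq_sym (HBA j Hj)) Hi).
    simpl. ring.
Qed.

Lemma lagrange_series_fixpoint (z g : R) :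
  0 <= z -> is_series (fun n => A n * z ^ n) g -> Rbar_lt g (CV_radius psi) ->
  g = z * PSeries psi g.
Proof.
  destruct A_lagrange as [HA0 HAS]. intros Hz Hg Hr.
  assert (Hg0 : 0 <= g).
  { refine (is_series_ge0 _ _ _ Hg).
    intro n. exact (Rmult_le_pos _ _ (lagrange_solution_ge0 n) (pow_le z n Hz)). }
  assert (Hcomp := is_series_fps_comp psi A z g _ psi_ge0 lagrange_solution_ge0 HA0 Hz Hg
                     (is_series_PSeries_ge0 psi g Hg0 Hr)).
  assert (Hshift : is_series (fun k => A (S k) * z ^ S k) g).
  { apply (is_series_incr_1 (fun n => A n * z ^ n)).
    change (plus g (A 0%nat * z ^ 0)) with (g + A 0%nat * z ^ 0).
    rewrite HA0, Rmult_0_l, Rplus_0_r. exact Hg. }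
  assert (Hshift' : is_series (fun k => A (S k) * z ^ S k) (PSeries psi g * z)).
  { apply (is_series_ext (fun k => fps_comp psi A k * z ^ k * z)).
    - intros k. rewrite HAS. simpl. ring.
    - now apply is_series_scal_r. }
  rewrite <- (is_series_unique _ _ Hshift) at 1.
  rewrite (is_series_unique _ _ Hshift'). ring.
Qed.

End LagrangeEquation.

Definition khinchin_pgf (psi : nat -> R) (t s : R) : R :=
  PSeries psi (t * s) / PSeries psi t.

Section KhinchinFamily.

Variables (psi : nat -> R) (t : R).
Hypotheses (psi_ge0 : forall n, 0 <= psi n) (psi0_gt0 : 0 < psi 0%nat)
  (t_gt0 : 0 < t) (t_lt_radius : Rbar_lt t (CV_radius psi)).

Local Notation F := (khinchin_pgf psi t).
Local Notation p := (khinchin psi t).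

Lemma lt_CV_radius_of_le (y : R) : y <= t -> Rbar_lt y (CV_radius psi).
Proof. intros Hy. apply (Rbar_le_lt_trans _ t); [simpl; lra | exact t_lt_radius]. Qed.

Lemma PSeries_t_gt0 : 0 < PSeries psi t.
Proof. apply PSeries_gt0; auto; lra. Qed.

Lemma khinchin_ge0 (k : nat) : 0 <= p k.
Proof.
  assert (H := PSeries_t_gt0). unfold khinchin.
  repeat apply Rmult_le_pos; [apply psi_ge0 | apply pow_le; lra |].
  now apply Rlt_le, Rinv_0_lt_compat.
Qed.

Lemma is_series_khinchin (s : R) :
  0 <= s <= 1 -> is_series (fun k => p k * s ^ k) (F s).
Proof.
  intros Hs. unfold khinchin_pgf, khinchin.
  apply (is_series_ext (fun k => psi k * (t * s) ^ k * / PSeries psi t)).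
  - intros k. rewrite Rpow_mult_distr. simpl. unfold Rdiv. ring.
  - apply is_series_scal_r, is_series_PSeries_ge0; [nra | apply lt_CV_radius_of_le; nra].
Qed.

Lemma khinchin_pgf_range (s : R) : 0 <= s <= 1 -> 0 <= F s <= 1.
Proof.
  intros Hs. assert (Ht := PSeries_t_gt0).
  assert (Hts : 0 < PSeries psi (t * s))
    by (apply PSeries_gt0, lt_CV_radius_of_le; auto; nra).
  assert (Hle : PSeries psi (t * s) <= PSeries psi t) by (apply PSeries_le; auto; nra).
  unfold khinchin_pgf. split.
  - apply Rlt_le, Rdiv_lt_0_compat; auto.
  - apply Rmult_le_reg_r with (PSeries psi t); auto.
    unfold Rdiv. rewrite Rmult_assoc, Rinv_l, Rmult_1_l, Rmult_1_r; lra.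
Qed.

Lemma iter_khinchin_pgf_range (n : nat) (s : R) :
  0 <= s <= 1 -> 0 <= Nat.iter n F s <= 1.
Proof.
  apply (Nat.iter_invariant n _ F (fun x => 0 <= x <= 1)), khinchin_pgf_range.
Qed.

Lemma t_mul_khinchin_pgf (s : R) : t * F s = t / PSeries psi t * PSeries psi (t * s).
Proof. assert (H := PSeries_t_gt0). unfold khinchin_pgf. field. lra. Qed.

Lemma gw_dist_ge0 (n k : nat) : 0 <= gw_dist p n k.
Proof.
  revert k. induction n as [|n IH]; intros k; simpl.
  - destruct (Nat.eqb k 1); lra.
  - apply Series_ge0. intros j. apply Rmult_le_pos; [apply IH|].
    rewrite conv_pow_fps_pow.
    exact (fps_pow_ge0 p k j k (fun i _ => khinchin_ge0 i) (le_n k)).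
Qed.

Lemma is_series_gw_dist (n : nat) (s : R) :
  0 <= s <= 1 -> is_series (fun k => gw_dist p n k * s ^ k) (Nat.iter n F s).
Proof.
  revert s. induction n as [|n IH]; intros s Hs.
  - replace (Nat.iter 0 F s) with (sum_f_R0 (fun k => gw_dist p 0 k * s ^ k) 1)
      by (simpl; ring).
    apply is_series_finite_support. intros [|[|k]] Hk; [lia | lia | simpl; ring].
  - set (b := fun j k => gw_dist p n j * conv_pow p j k * s ^ k).
    assert (Hb : forall j k, 0 <= b j k).
    { intros j k. unfold b. rewrite conv_pow_fps_pow.
      repeat apply Rmult_le_pos; [apply gw_dist_ge0 | | apply pow_le; lra].
      exact (fps_pow_ge0 p k j k (fun i _ => khinchin_ge0 i) (le_n k)). }
    assert (Hrow : forall j, is_series (b j) (gw_dist p n j * F s ^ j)).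
    { intros j. rewrite Rmult_comm.
      apply (is_series_ext (fun k => fps_pow p j k * s ^ k * gw_dist p n j)).
      - intros k. unfold b. rewrite (conv_pow_fps_pow p j k). simpl. ring.
      - apply is_series_scal_r, is_series_fps_pow;
          [exact khinchin_ge0 | lra | now apply is_series_khinchin]. }
    destruct (is_series_tonelli b _ _ Hb Hrow (IH (F s) (khinchin_pgf_range s Hs)))
      as [_ Hcol].
    rewrite Nat.iter_succ_r.
    refine (is_series_ext _ _ _ _ Hcol). intros k. unfold b. simpl.
    now rewrite Series_scal_r.
Qed.

Lemma gw_dist_extinct (n : nat) : gw_dist p n 0 = Nat.iter n F 0.
Proof.
  rewrite <- (is_series_unique _ _ (is_series_gw_dist n 0 ltac:(lra))).
  symmetry. rewrite (is_series_unique _ (sum_f_R0 (fun k => gw_dist p n k * 0 ^ k) 0)).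
  - simpl. ring.
  - apply is_series_finite_support. intros [|k] Hk; [lia | simpl; ring].
Qed.

Variable A : nat -> R.
Hypothesis A_lagrange : lagrange_solution psi A.

Local Notation z := (t / PSeries psi t).

Lemma t_div_PSeries_ge0 : 0 <= z.
Proof. apply Rlt_le, Rdiv_lt_0_compat; [exact t_gt0 | exact PSeries_t_gt0]. Qed.

Lemma lagrange_term_ge0 (n : nat) : 0 <= A n * z ^ n.
Proof.
  apply Rmult_le_pos; [exact (lagrange_solution_ge0 psi A psi_ge0 A_lagrange n) |].
  apply pow_le, t_div_PSeries_ge0.
Qed.

Lemma lagrange_partial_sum_le_iter (N : nat) :
  sum_f_R0 (fun n => A n * z ^ n) N <= t * Nat.iter N F 0.
Proof.
  induction N as [|N IH].
  - simpl. rewrite (proj1 A_lagrange). lra.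
  - assert (Hx := iter_khinchin_pgf_range N 0 ltac:(lra)).
    assert (HSN := cond_pos_sum _ N lagrange_term_ge0).
    apply Rle_trans with (z * PSeries psi (sum_f_R0 (fun n => A n * z ^ n) N)).
    { apply (lagrange_partial_sum_succ_le psi A psi_ge0 A_lagrange z N t_div_PSeries_ge0).
      apply lt_CV_radius_of_le. nra. }
    rewrite Nat.iter_succ, t_mul_khinchin_pgf.
    apply Rmult_le_compat_l; [exact t_div_PSeries_ge0|].
    apply PSeries_le; [exact psi_ge0 | lra | apply lt_CV_radius_of_le; nra].
Qed.

Lemma iter_le_lagrange_fixpoint (g : R) (m : nat) :
  0 <= g <= t -> g = z * PSeries psi g -> t * Nat.iter m F 0 <= g.
Proof.
  intros Hg Hfix. induction m as [|m IH]; [simpl; lra|].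
  assert (Hx := iter_khinchin_pgf_range m 0 ltac:(lra)).
  rewrite Nat.iter_succ, t_mul_khinchin_pgf, Hfix.
  apply Rmult_le_compat_l; [exact t_div_PSeries_ge0|].
  apply PSeries_le; [exact psi_ge0 | nra | apply lt_CV_radius_of_le; lra].
Qed.

Lemma is_lim_seq_iter_khinchin_pgf :
  exists g : R, is_series (fun n => A n * z ^ n) g /\
    is_lim_seq (fun n => Nat.iter n F 0) (g / t).
Proof.
  assert (Hbound : forall N, sum_f_R0 (fun n => A n * z ^ n) N <= t).
  { intros N. assert (Hx := iter_khinchin_pgf_range N 0 ltac:(lra)).
    eapply Rle_trans; [apply lagrange_partial_sum_le_iter | nra]. }
  destruct (ex_series_bounded_nonneg _ _ lagrange_term_ge0 Hbound) as [g Hg].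
  assert (Hg0 : 0 <= g) by exact (is_series_ge0 _ _ lagrange_term_ge0 Hg).
  assert (Hgt : g <= t) by exact (is_series_le_bound _ _ _ Hbound Hg).
  assert (Hfix : g = z * PSeries psi g).
  { apply (lagrange_series_fixpoint psi A psi_ge0 A_lagrange z g t_div_PSeries_ge0 Hg).
    apply lt_CV_radius_of_le. exact Hgt. }
  exists g. split; [exact Hg|].
  apply is_lim_seq_le_le
    with (fun N => sum_f_R0 (fun n => A n * z ^ n) N / t) (fun _ => g / t).
  - intros N. unfold Rdiv. split; apply Rmult_le_reg_l with t; try exact t_gt0;
      field_simplify; try lra.
    + apply lagrange_partial_sum_le_iter.
    + apply iter_le_lagrange_fixpoint; [split|]; assumption.
  - apply is_series_Reals, is_lim_seq_Reals in Hg.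
    exact (is_lim_seq_scal_r _ (/ t) _ Hg).
  - apply is_lim_seq_const.
Qed.

End KhinchinFamily.

Theorem theorem6p4 (psi A : nat -> R) :
  in_K psi ->
  lagrange_solution psi A ->
  forall t : R, 0 < t -> Rbar_lt (Finite t) (CV_radius psi) ->
  exists q : R,
    extinction_prob (khinchin psi t) = Finite q /\
    is_series (fun n => A n * t ^ (n - 1) / (PSeries psi t) ^ n) q /\
    is_series (fun n => A n * (t / PSeries psi t) ^ n) (t * q).
Proof.
  intros [psi_ge0 [psi0_gt0 _]] HA t Ht Hr.
  destruct (is_lim_seq_iter_khinchin_pgf psi t psi_ge0 psi0_gt0 Ht Hr A HA) as [g [Hg Hlim]].
  assert (HP := PSeries_t_gt0 psi t psi_ge0 psi0_gt0 Ht Hr).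
  exists (g / t). split; [|split].
  - unfold extinction_prob.
    rewrite (Lim_seq_ext _ _ (gw_dist_extinct psi t psi_ge0 psi0_gt0 Ht Hr)).
    now apply is_lim_seq_unique.
  - apply (is_series_ext (fun n => A n * (t / PSeries psi t) ^ n * / t)).
    + intros [|n]; [rewrite (proj1 HA); simpl; field; lra|].
      replace (S n - 1)%nat with n by lia.
      unfold Rdiv. rewrite Rpow_mult_distr, pow_inv. simpl. field.
      split; [apply pow_nonzero|]; lra.
    + now apply is_series_scal_r.
  - replace (t * (g / t)) with g by (field; lra). exact Hg.
Qed.
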